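(* Let $n\ge4$ and let $\sigma_1,\dots,\sigma_n>0$ be such that the sequence $(0,\sigma_1^2,\dots,\sigma_n^2,0)$ is concave. Then $$\frac{n-1}{n}\sum_{i=1}^n\sigma_i^2\;>\;2\max_{\substack{x\in\mathbb{R}^n\setminus\{0\}\\ x_1+\cdots+x_n=0}}\frac{\sigma_1^2x_1^2+\cdots+\sigma_n^2x_n^2}{x_1^2+\cdots+x_n^2}.$$
   Context: A finite sequence $(a_1,\dots,a_m)$ is concave if every three consecutive elements satisfy $a_{i+1}\ge\frac12(a_i+a_{i+2})$. *)

From Stdlib Require Import Reals Lra Lia Arith.
Open Scope R_scope.

Fixpoint sumR (n : nat) (f : nat -> R) : R :=
  match n with
  | O => 0
  | S k => sumR k f + f k
  end.

Definition sum1 (n : nat) (f : nat -> R) : R := sumR n (fun k => f (S k)).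

Definition concave_seq (m : nat) (a : nat -> R) : Prop :=
  forall i : nat, (i + 2 < m)%nat -> a (S i) >= (a i + a (S (S i))) / 2.

(* The sequence (0, sigma_1^2, ..., sigma_n^2, 0), of length n+2, indexed from 0. *)
Definition padded_sq (n : nat) (sigma : nat -> R) (i : nat) : R :=
  if Nat.eqb i 0 then 0 else if Nat.leb i n then (sigma i)^2 else 0.

Definition admissible (n : nat) (x : nat -> R) : Prop :=
  (exists i : nat, (1 <= i <= n)%nat /\ x i <> 0) /\ sum1 n x = 0.

Definition rquot (n : nat) (sigma x : nat -> R) : R :=
  sum1 n (fun i => (sigma i)^2 * (x i)^2) / sum1 n (fun i => (x i)^2).

Definition is_max_rquot (n : nat) (sigma : nat -> R) (M : R) : Prop :=
  (exists x, admissible n x /\ rquot n sigma x = M) /\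
  (forall x, admissible n x -> rquot n sigma x <= M).

(* Write a_i = sigma_i^2, so that a_0 = a_(n+1) = 0 and (a_0, ..., a_(n+1)) is
   concave, and put c = (n-1)/(2n) * (a_1 + ... + a_n).  The quantity to bound is
   the largest value lam of the diagonal form sum a_i x_i^2 on the unit sphere of
   the hyperplane H = {sum x_i = 0}.

   Both the existence of lam and the bound lam < c rest on one inequality (a
   weighted Cauchy-Schwarz): if d_i > 0 for all i <> k and T = sum_(i<>k) 1/d_i,
   then for x in H,  T * sum d_i x_i^2 >= x_k^2 * (1 + d_k T).  Hence the form
   sum d_i x_i^2 is nonnegative on H when 1 + d_k T >= 0 and positive definite on
   H when 1 + d_k T > 0 (the "secular condition").
   - Existence: with k the index of the largest a_i, the secular equation
     sum 1/(lam - a_i) = 0 has a root lam between the two largest values of a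
     (intermediate value theorem), or lam = a_k if the maximum is attained twice;
     for d = lam - a we get 1 + d_k T = 0, and x_i = 1/d_i attains the maximum.
   - Bound: a concave sequence vanishing at both ends dominates the tent through
     (k, a_k), so sum a_i >= (n+1)/2 * a_k, which gives a_k < c when n >= 5; then
     d = c - a is positive everywhere.  For n = 4 we write a as a nonnegative
     combination of tents, with weights the second differences w_j; in these
     coordinates the secular condition for d = c - a becomes a cubic in w with
     positive coefficients. *)
From Stdlib Require Import Bool Reals Lra Lia Psatz Ranalysis5.
Open Scope R_scope.

(** * Finite sums *)

Lemma sumR_ext m f g : (forall i, (i < m)%nat -> f i = g i) -> sumR m f = sumR m g.
Proof.
  induction m as [|m IH]; intros H; simpl; [reflexivity|].
  rewrite IH by (intros; apply H; lia). rewrite H by lia; reflexivity.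
Qed.

Lemma sumR_plus m f g : sumR m (fun i => f i + g i) = sumR m f + sumR m g.
Proof. induction m as [|m IH]; simpl; [lra|]. rewrite IH; lra. Qed.

Lemma sumR_minus m f g : sumR m (fun i => f i - g i) = sumR m f - sumR m g.
Proof. induction m as [|m IH]; simpl; [lra|]. rewrite IH; lra. Qed.

Lemma sumR_scal m c f : sumR m (fun i => c * f i) = c * sumR m f.
Proof. induction m as [|m IH]; simpl; [lra|]. rewrite IH; lra. Qed.

Lemma sumR_const m c : sumR m (fun _ => c) = INR m * c.
Proof. induction m as [|m IH]; simpl sumR; [simpl; lra|]. rewrite IH, S_INR; lra. Qed.

Lemma sumR_le m f g : (forall i, (i < m)%nat -> f i <= g i) -> sumR m f <= sumR m g.
Proof.
  induction m as [|m IH]; intros H; simpl; [lra|].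
  assert (sumR m f <= sumR m g) by (apply IH; intros; apply H; lia).
  assert (f m <= g m) by (apply H; lia). lra.
Qed.

Lemma sumR_lt m f g : (forall i, (i < m)%nat -> f i <= g i) ->
  (exists j, (j < m)%nat /\ f j < g j) -> sumR m f < sumR m g.
Proof.
  induction m as [|m IH]; intros H [j [Hj Hlt]]; [lia|]. simpl.
  assert (Hm : f m <= g m) by (apply H; lia).
  destruct (Nat.eq_dec j m) as [->|Hne].
  - assert (sumR m f <= sumR m g) by (apply sumR_le; intros; apply H; lia). lra.
  - assert (sumR m f < sumR m g) by (apply IH; [intros; apply H; lia | exists j; split; [lia|exact Hlt]]).
    lra.
Qed.

Lemma sumR_shift m f : sumR (S m) f = f 0%nat + sumR m (fun i => f (S i)).
Proof. induction m as [|m IH]; simpl in *; [lra|]. rewrite IH; lra. Qed.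

Lemma sumR_app k m f : sumR (k + m) f = sumR k f + sumR m (fun i => f (k + i)%nat).
Proof.
  induction m as [|m IH]; simpl.
  - rewrite Nat.add_0_r; lra.
  - rewrite Nat.add_succ_r; simpl; rewrite IH; lra.
Qed.

Lemma sumR_rev m f : sumR m f = sumR m (fun i => f (m - 1 - i)%nat).
Proof.
  revert f; induction m as [|m IH]; intros f; [reflexivity|].
  rewrite sumR_shift, (IH (fun i => f (S i))). cbn [sumR].
  replace (S m - 1 - m)%nat with 0%nat by lia.
  rewrite (sumR_ext m (fun i => f (S (m - 1 - i))) (fun i => f (S m - 1 - i)%nat)); [lra|].
  intros i Hi; f_equal; lia.
Qed.

Lemma sumR_continuity m (F : nat -> R -> R) x :
  (forall i, (i < m)%nat -> continuity_pt (F i) x) ->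
  continuity_pt (fun y => sumR m (fun i => F i y)) x.
Proof.
  induction m as [|m IH]; intros H; simpl.
  - apply continuity_pt_const; intros u v; reflexivity.
  - apply (continuity_pt_plus (fun y => sumR m (fun i => F i y)) (F m)).
    + apply IH; intros; apply H; lia.
    + apply H; lia.
Qed.

Lemma sum1_ext n f g : (forall i, (1 <= i <= n)%nat -> f i = g i) -> sum1 n f = sum1 n g.
Proof. intros H; unfold sum1; apply sumR_ext; intros; apply H; lia. Qed.

Lemma sum1_plus n f g : sum1 n (fun i => f i + g i) = sum1 n f + sum1 n g.
Proof. unfold sum1; apply sumR_plus. Qed.

Lemma sum1_minus n f g : sum1 n (fun i => f i - g i) = sum1 n f - sum1 n g.
Proof. unfold sum1; apply sumR_minus. Qed.

Lemma sum1_scal n c f : sum1 n (fun i => c * f i) = c * sum1 n f.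
Proof. unfold sum1; apply sumR_scal. Qed.

Lemma sum1_const n c : sum1 n (fun _ => c) = INR n * c.
Proof. unfold sum1; apply sumR_const. Qed.

Lemma sum1_le n f g : (forall i, (1 <= i <= n)%nat -> f i <= g i) -> sum1 n f <= sum1 n g.
Proof. intros H; unfold sum1; apply sumR_le; intros; apply H; lia. Qed.

Lemma sum1_nonneg n f : (forall i, (1 <= i <= n)%nat -> 0 <= f i) -> 0 <= sum1 n f.
Proof.
  intros H. assert (sum1 n (fun _ => 0) <= sum1 n f) by (apply sum1_le; auto).
  rewrite sum1_const in *; lra.
Qed.

Lemma sum1_pos n f : (forall i, (1 <= i <= n)%nat -> 0 <= f i) ->
  (exists j, (1 <= j <= n)%nat /\ 0 < f j) -> 0 < sum1 n f.
Proof.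
  intros H [j [Hj Hpos]].
  assert (sum1 n (fun _ => 0) < sum1 n f).
  { unfold sum1; apply sumR_lt; [intros; apply H; lia|].
    exists (j - 1)%nat; replace (S (j - 1)) with j by lia; split; [lia|exact Hpos]. }
  rewrite sum1_const in *; lra.
Qed.

Definition sum1_off (n k : nat) (f : nat -> R) : R :=
  sum1 n (fun i => if Nat.eqb i k then 0 else f i).

Lemma sum1_split n k f : (1 <= k <= n)%nat -> sum1 n f = sum1_off n k f + f k.
Proof.
  intros Hk. unfold sum1_off, sum1.
  assert (G : forall m, sumR m (fun j => f (S j)) =
     sumR m (fun j => if Nat.eqb (S j) k then 0 else f (S j)) + (if Nat.leb k m then f k else 0)).
  { induction m as [|m IH]; cbn [sumR].
    - destruct (Nat.leb_spec k 0); [lia|lra].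
    - rewrite IH. destruct (Nat.leb_spec k m), (Nat.eqb_spec (S m) k), (Nat.leb_spec k (S m));
        try lia; subst; lra. }
  rewrite G. destruct (Nat.leb_spec k n); [reflexivity|lia].
Qed.

Definition indic (k i : nat) : R := if Nat.eqb i k then 1 else 0.

Lemma sum1_indic n k : (1 <= k <= n)%nat -> sum1 n (indic k) = 1.
Proof.
  intros Hk. rewrite (sum1_split n k) by exact Hk. unfold sum1_off, indic.
  rewrite Nat.eqb_refl, (sum1_ext n _ (fun _ => 0)), sum1_const; [lra|].
  intros i _; destruct (Nat.eqb i k); reflexivity.
Qed.

Lemma argmax_exists (f : nat -> R) (P : nat -> bool) m :
  (forall i, (1 <= i <= m)%nat -> P i = false) \/
  exists j, (1 <= j <= m)%nat /\ P j = true /\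
    forall i, (1 <= i <= m)%nat -> P i = true -> f i <= f j.
Proof.
  induction m as [|m IH]; [left; lia|].
  destruct IH as [Hnone | [j [Hj [Pj Hmax]]]]; destruct (P (S m)) eqn:HP.
  - right; exists (S m); split; [lia|split; [exact HP|]].
    intros i Hi Pi. destruct (Nat.eq_dec i (S m)) as [->|]; [lra|].
    rewrite Hnone in Pi by lia; discriminate.
  - left; intros i Hi. destruct (Nat.eq_dec i (S m)) as [->|]; [exact HP|apply Hnone; lia].
  - right. destruct (Rle_lt_dec (f (S m)) (f j)).
    + exists j; split; [lia|split; [exact Pj|]]. intros i Hi Pi.
      destruct (Nat.eq_dec i (S m)) as [->|]; [lra|apply Hmax; auto; lia].
    + exists (S m); split; [lia|split; [exact HP|]]. intros i Hi Pi.
      destruct (Nat.eq_dec i (S m)) as [->|]; [lra|].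
      assert (f i <= f j) by (apply Hmax; auto; lia). lra.
  - right; exists j; split; [lia|split; [exact Pj|]]. intros i Hi Pi.
    destruct (Nat.eq_dec i (S m)) as [->|]; [congruence|apply Hmax; auto; lia].
Qed.

Lemma argmax_index (f : nat -> R) n : (1 <= n)%nat ->
  exists k, (1 <= k <= n)%nat /\ forall i, (1 <= i <= n)%nat -> f i <= f k.
Proof.
  intros Hn. destruct (argmax_exists f (fun _ => true) n) as [Hnone | [k [Hk [_ Hmax]]]].
  - specialize (Hnone 1%nat ltac:(lia)); discriminate.
  - exists k; split; auto.
Qed.

(** * Diagonal quadratic forms on the hyperplane sum x_i = 0 *)

Lemma pow2_pos x : x <> 0 -> 0 < x ^ 2.
Proof. intros H; rewrite <- Rsqr_pow2; apply Rsqr_pos_lt, H. Qed.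

Lemma sqnorm_pos n y : admissible n y -> 0 < sum1 n (fun i => y i ^ 2).
Proof.
  intros [[j [Hj Hy]] _]. apply sum1_pos; [intros; apply pow2_ge_0|].
  exists j; split; [exact Hj|apply pow2_pos, Hy].
Qed.

(* sum (lam - a_i) y_i^2 = lam * |y|^2 - sum a_i y_i^2: bounds on the form are
   nonnegativity statements for the shifted weights lam - a. *)
Lemma form_shift n lam a y :
  sum1 n (fun i => (lam - a i) * y i ^ 2)
  = lam * sum1 n (fun i => y i ^ 2) - sum1 n (fun i => a i * y i ^ 2).
Proof.
  rewrite <- sum1_scal, <- sum1_minus. apply sum1_ext; intros; ring.
Qed.

Lemma sq_tangent_bound d y t : 0 < d -> d * y ^ 2 >= 2 * t * y - t ^ 2 / d.
Proof.
  intros Hd.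
  assert (0 <= (d * y - t) ^ 2 / d) by (apply Rmult_le_pos; [apply pow2_ge_0|left; apply Rinv_0_lt_compat; lra]).
  assert ((d * y - t) ^ 2 / d = d * y ^ 2 - (2 * t * y - t ^ 2 / d)) by (field; lra).
  lra.
Qed.

Lemma other_index n k : (2 <= n)%nat -> (1 <= k <= n)%nat ->
  exists j, (1 <= j <= n)%nat /\ j <> k.
Proof. intros Hn Hk. destruct (Nat.eq_dec k 1) as [->|Hk1]; [exists 2%nat|exists 1%nat]; lia. Qed.

Section SecularBound.
Variables (n k : nat) (d : nat -> R).
Hypothesis Hn : (2 <= n)%nat.
Hypothesis Hk : (1 <= k <= n)%nat.
Hypothesis Hd : forall i, (1 <= i <= n)%nat -> i <> k -> 0 < d i.

Let T : R := sum1_off n k (fun i => / d i).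

Lemma off_inv_sum_pos : 0 < T.
Proof.
  unfold T, sum1_off. apply sum1_pos.
  - intros i Hi. destruct (Nat.eqb_spec i k); [lra|].
    left; apply Rinv_0_lt_compat, Hd; auto.
  - destruct (other_index n k Hn Hk) as [j [Hj Hjk]].
    exists j; split; [exact Hj|].
    destruct (Nat.eqb_spec j k); [contradiction|]. apply Rinv_0_lt_compat, Hd; assumption.
Qed.

(* Weighted Cauchy-Schwarz on the hyperplane: since sum_(i<>k) y_i = - y_k,
   T * sum_(i<>k) d_i y_i^2 >= y_k^2.  This follows by summing the tangent-line
   bounds for the terms i <> k, all taken at the slope t = - y_k / T. *)
Lemma form_lower_bound y : sum1 n y = 0 ->
  T * sum1 n (fun i => d i * y i ^ 2) >= y k ^ 2 * (1 + d k * T).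
Proof.
  intros Hy. pose proof off_inv_sum_pos as HT.
  set (t := - y k / T).
  rewrite (sum1_split n k) by exact Hk.
  set (Q := sum1_off n k _).
  assert (HQ : Q >= sum1_off n k (fun i => 2 * t * y i - t ^ 2 * / d i)).
  { apply Rle_ge, sum1_le. intros i Hi. destruct (Nat.eqb_spec i k); [lra|].
    apply Rge_le, sq_tangent_bound, Hd; auto. }
  assert (Hoff : sum1_off n k (fun i => 2 * t * y i - t ^ 2 * / d i)
                 = 2 * t * sum1_off n k y - t ^ 2 * T).
  { unfold T, sum1_off. rewrite <- !sum1_scal, <- sum1_minus.
    apply sum1_ext; intros i _; destruct (Nat.eqb i k); ring. }
  assert (Hs : sum1_off n k y = - y k) by (rewrite (sum1_split n k) in Hy by exact Hk; lra).
  assert (E : T * (2 * t * - y k - t ^ 2 * T) = y k ^ 2) by (unfold t; field; lra).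
  rewrite Hoff, Hs in HQ.
  assert (T * Q >= y k ^ 2) by (rewrite <- E; apply Rle_ge, Rmult_le_compat_l; lra).
  nra.
Qed.

Lemma form_nonneg y : sum1 n y = 0 -> 0 <= 1 + d k * T ->
  0 <= sum1 n (fun i => d i * y i ^ 2).
Proof.
  intros Hy Hsec. pose proof off_inv_sum_pos as HT. pose proof (form_lower_bound y Hy).
  assert (0 <= y k ^ 2 * (1 + d k * T)) by (apply Rmult_le_pos; [apply pow2_ge_0|lra]).
  nra.
Qed.

Lemma form_pos y : admissible n y -> 0 < 1 + d k * T ->
  0 < sum1 n (fun i => d i * y i ^ 2).
Proof.
  intros [[j [Hj Hyj]] Hy] Hsec. pose proof off_inv_sum_pos as HT.
  destruct (Req_dec (y k) 0) as [Hyk|Hyk].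
  - rewrite (sum1_split n k), Hyk by exact Hk. unfold sum1_off.
    assert (0 < sum1 n (fun i => if Nat.eqb i k then 0 else d i * y i ^ 2)); [|lra].
    apply sum1_pos.
    + intros i Hi. destruct (Nat.eqb_spec i k); [lra|].
      apply Rmult_le_pos; [left; apply Hd; auto|apply pow2_ge_0].
    + exists j; split; [exact Hj|]. destruct (Nat.eqb_spec j k); [subst; contradiction|].
      apply Rmult_lt_0_compat; [apply Hd; auto|apply pow2_pos, Hyj].
  - pose proof (form_lower_bound y Hy).
    assert (0 < y k ^ 2 * (1 + d k * T)) by (apply Rmult_lt_0_compat; [apply pow2_pos|]; lra).
    nra.
Qed.

End SecularBound.

(** * Existence of the maximum: the secular equation *)

Definition form_max (n : nat) (a : nat -> R) (lam : R) : Prop :=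
  (exists x, admissible n x /\
     sum1 n (fun i => a i * x i ^ 2) = lam * sum1 n (fun i => x i ^ 2)) /\
  (forall y, admissible n y ->
     sum1 n (fun i => a i * y i ^ 2) <= lam * sum1 n (fun i => y i ^ 2)).

Section FormMax.
Variables (n k : nat) (a : nat -> R).
Hypothesis Hn : (2 <= n)%nat.
Hypothesis Hk : (1 <= k <= n)%nat.
Hypothesis Hkmax : forall i, (1 <= i <= n)%nat -> a i <= a k.

(* If the largest value is attained twice, it is the maximum, attained at e_k - e_j. *)
Lemma form_max_tie j : (1 <= j <= n)%nat -> j <> k -> a j = a k -> form_max n a (a k).
Proof.
  intros Hj Hjk Hajk. split.
  - exists (fun i => indic k i - indic j i). split; [split|].
    + exists k; split; [exact Hk|]. unfold indic; rewrite Nat.eqb_refl.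
      destruct (Nat.eqb_spec k j); [lia|lra].
    + rewrite sum1_minus, !sum1_indic by auto; lra.
    + rewrite <- sum1_scal. apply sum1_ext; intros i Hi; unfold indic.
      destruct (Nat.eqb_spec i k), (Nat.eqb_spec i j); subst; try lia; try rewrite Hajk; ring.
  - intros y Hy. pose proof (form_shift n (a k) a y).
    assert (0 <= sum1 n (fun i => (a k - a i) * y i ^ 2)); [|lra].
    apply sum1_nonneg; intros i Hi.
    apply Rmult_le_pos; [pose proof (Hkmax i Hi); lra|apply pow2_ge_0].
Qed.

(* A root z of the secular equation sum 1/(z - a_i) = 0 with a_i < z < a_k for i <> k
   is the maximum, attained at x_i = 1/(z - a_i). *)
Lemma form_max_secular_root z :
  (forall i, (1 <= i <= n)%nat -> i <> k -> a i < z) -> z < a k ->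
  sum1 n (fun i => / (z - a i)) = 0 -> form_max n a z.
Proof.
  intros Hlow Hup Hroot.
  set (d := fun i => z - a i).
  change (sum1 n (fun i => / d i) = 0) in Hroot.
  assert (Hd : forall i, (1 <= i <= n)%nat -> i <> k -> 0 < d i)
    by (intros i Hi Hik; pose proof (Hlow i Hi Hik); unfold d; lra).
  assert (Hdk : d k < 0) by (unfold d; lra).
  split.
  - exists (fun i => / d i). split; [split; [|exact Hroot]|].
    + exists k; split; [exact Hk|]. apply Rinv_neq_0_compat; lra.
    + pose proof (form_shift n z a (fun i => / d i)).
      assert (sum1 n (fun i => d i * (/ d i) ^ 2) = 0); [|unfold d in *; lra].
      rewrite <- Hroot. apply sum1_ext; intros i Hi.
      assert (Hdi : d i <> 0)
        by (destruct (Nat.eq_dec i k) as [->|Hik]; [lra|pose proof (Hd i Hi Hik); lra]).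
      unfold d in *; field; exact Hdi.
  - intros y Hy. pose proof (form_shift n z a y).
    assert (0 <= sum1 n (fun i => d i * y i ^ 2)); [|unfold d in *; lra].
    apply (form_nonneg n k d Hn Hk Hd y (proj2 Hy)).
    assert (E : sum1_off n k (fun i => / d i) = - / d k)
      by (rewrite (sum1_split n k) in Hroot by exact Hk; lra).
    rewrite E. assert (d k * - / d k = -1) by (field; lra). lra.
Qed.

Lemma inv_shift_continuity c x : x - c <> 0 -> continuity_pt (fun y => / (y - c)) x.
Proof.
  intros Hx. apply (continuity_pt_inv (fun y => y - c)); [|exact Hx].
  apply (continuity_pt_minus (fun y => y) (fun _ => c)).
  - apply derivable_continuous_pt, derivable_pt_id.
  - apply continuity_pt_const; intros u v; reflexivity.
Qed.

(* If a_j < a_k and a_j bounds all a_i with i <> k, the secular function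
   h(z) = sum 1/(z - a_i) is positive at z1 = a_j + e and negative at z2 = a_k - e,
   where e = (a_k - a_j) / (2n); so it has a root in between. *)
Lemma secular_root_exists j : (1 <= j <= n)%nat -> j <> k ->
  (forall i, (1 <= i <= n)%nat -> i <> k -> a i <= a j) -> a j < a k ->
  exists z, a j < z < a k /\ sum1 n (fun i => / (z - a i)) = 0.
Proof.
  intros Hj Hjk Hjmax Hgap.
  set (N := INR n). set (h := fun z => sum1 n (fun i => / (z - a i))).
  assert (HN : 2 <= N) by (unfold N; replace 2 with (INR 2) by (simpl; lra); apply le_INR; exact Hn).
  set (e := (a k - a j) / (2 * N)).
  assert (He : 0 < e) by (apply Rdiv_lt_0_compat; lra).
  assert (Hak : a k = a j + 2 * N * e) by (unfold e; field; lra).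
  assert (He2 : 2 * e < a k - a j) by nra.
  set (z1 := a j + e). set (z2 := a k - e).
  assert (Hh1 : 0 < h z1).
  { assert (Hlow : sum1 n (fun i => / (z1 - a j) * indic j i + / (z1 - a k) * indic k i) <= h z1).
    { apply sum1_le; intros i Hi; unfold indic.
      destruct (Nat.eqb_spec i j) as [Hij|Hij], (Nat.eqb_spec i k) as [Hik|Hik];
        subst; try lia; try lra.
      pose proof (Hjmax i Hi Hik). rewrite !Rmult_0_r, Rplus_0_r.
      left; apply Rinv_0_lt_compat; unfold z1; lra. }
    rewrite sum1_plus, !sum1_scal, !sum1_indic in Hlow by auto.
    assert (E : / (z1 - a j) * 1 + / (z1 - a k) * 1 = (2 * N - 2) / ((2 * N - 1) * e))
      by (unfold z1; rewrite Hak; field; repeat split; nra).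
    assert (0 < (2 * N - 2) / ((2 * N - 1) * e)) by (apply Rdiv_lt_0_compat; nra).
    lra. }
  assert (Hh2 : h z2 < 0).
  { assert (Hup : h z2 <= sum1 n (fun i => / (z2 - a j) + (/ (z2 - a k) - / (z2 - a j)) * indic k i)).
    { apply sum1_le; intros i Hi; unfold indic.
      destruct (Nat.eqb_spec i k) as [->|Hik]; [lra|].
      pose proof (Hjmax i Hi Hik). rewrite Rmult_0_r, Rplus_0_r.
      apply Rinv_le_contravar; unfold z2; lra. }
    rewrite sum1_plus, sum1_scal, sum1_const, sum1_indic in Hup by auto. fold N in Hup.
    assert (E : N * / (z2 - a j) + (/ (z2 - a k) - / (z2 - a j)) * 1 = - N / ((2 * N - 1) * e))
      by (unfold z2; rewrite Hak; field; repeat split; nra).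
    assert (0 < N / ((2 * N - 1) * e)) by (apply Rdiv_lt_0_compat; nra).
    lra. }
  destruct (IVT_interv (fun z => - h z) z1 z2) as [z [Hz Hhz]].
  - intros x Hx. apply continuity_pt_opp. unfold h, sum1.
    apply (sumR_continuity n (fun i y => / (y - a (S i)))); intros i Hi.
    apply inv_shift_continuity. destruct (Nat.eq_dec (S i) k) as [->|E].
    + unfold z2 in Hx; lra.
    + pose proof (Hjmax (S i) ltac:(lia) E). unfold z1 in Hx; lra.
  - unfold z1, z2; nra.
  - lra.
  - lra.
  - exists z; split; [unfold z1, z2 in Hz; lra|unfold h in Hhz; lra].
Qed.

End FormMax.

Lemma form_max_exists n a : (2 <= n)%nat -> exists lam, form_max n a lam.
Proof.
  intros Hn.
  destruct (argmax_index a n ltac:(lia)) as [k [Hk Hkmax]].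
  destruct (argmax_exists a (fun i => negb (Nat.eqb i k)) n) as [Hnone | [j [Hj [Hjk Hjmax]]]].
  - destruct (other_index n k Hn Hk) as [j [Hj Hjk]].
    specialize (Hnone j Hj). destruct (Nat.eqb_spec j k); [contradiction|discriminate].
  - apply negb_true_iff, Nat.eqb_neq in Hjk.
    assert (HjB : forall i, (1 <= i <= n)%nat -> i <> k -> a i <= a j)
      by (intros i Hi Hik; apply Hjmax; [exact Hi|apply negb_true_iff, Nat.eqb_neq, Hik]).
    destruct (Rle_lt_or_eq_dec _ _ (Hkmax j Hj)) as [Hlt|Heq].
    + destruct (secular_root_exists n k a Hn Hk j Hj Hjk HjB Hlt) as [z [Hz Hroot]].
      exists z. apply (form_max_secular_root n k a Hn Hk); [|lra|exact Hroot].
      intros i Hi Hik; pose proof (HjB i Hi Hik); lra.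
    + exists (a k). apply (form_max_tie n k a) with (j := j); auto.
Qed.

(** * Concave sequences vanishing at the ends *)

Section ConcaveFromZero.
Variables (f : nat -> R) (m : nat).
Hypothesis f0 : f 0%nat = 0.
Hypothesis fconc : concave_seq (S m) f.

Lemma ratio_step i : (i + 1 <= m)%nat -> INR (S i) * f i >= INR i * f (S i).
Proof.
  induction i as [|i IH]; intros Hi.
  - rewrite f0; simpl; lra.
  - pose proof (IH ltac:(lia)). pose proof (fconc i ltac:(lia)).
    rewrite !S_INR in *. pose proof (pos_INR i). nra.
Qed.

Lemma chord_below i k : (i <= k <= m)%nat -> INR k * f i >= INR i * f k.
Proof.
  intros [Hik Hkm]. induction Hik as [|k Hik IH].
  - lra.
  - pose proof (IH ltac:(lia)). pose proof (ratio_step k ltac:(lia)).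
    rewrite S_INR in *. pose proof (pos_INR i).
    destruct (Rle_lt_or_eq_dec 0 (INR k) (pos_INR k)) as [Hk|Hk].
    + apply Rle_ge, (Rmult_le_reg_l (INR k)); [exact Hk|nra].
    + assert (k = 0%nat) by (apply INR_eq; simpl; lra). subst k.
      assert (i = 0%nat) by lia. subst i. rewrite f0. simpl; lra.
Qed.

Lemma partial_sum_lower k : (1 <= k <= m)%nat -> sumR k (fun i => f (S i)) >= (INR k + 1) / 2 * f k.
Proof.
  intros Hk.
  assert (G : forall j, (j <= k)%nat -> 2 * INR k * sumR j (fun i => f (S i)) >= f k * INR j * INR (S j)).
  { induction j as [|j IH]; intros Hj; [simpl; lra|].
    pose proof (IH ltac:(lia)). pose proof (chord_below (S j) k ltac:(lia)).
    cbn [sumR]. rewrite !S_INR in *. lra. }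
  pose proof (G k (le_n k)). rewrite S_INR in *.
  assert (0 < INR k) by (apply lt_0_INR; lia).
  apply Rle_ge, (Rmult_le_reg_l (2 * INR k)); nra.
Qed.

End ConcaveFromZero.

Lemma concave_seq_rev m f : concave_seq m f -> concave_seq m (fun i => f (m - 1 - i)%nat).
Proof.
  intros Hf i Hi. pose proof (Hf (m - 3 - i)%nat ltac:(lia)).
  replace (m - 1 - i)%nat with (S (S (m - 3 - i))) by lia.
  replace (m - 1 - S i)%nat with (S (m - 3 - i)) by lia.
  replace (m - 1 - S (S i))%nat with (m - 3 - i)%nat by lia. lra.
Qed.

(* A concave sequence vanishing at 0 and n+1 dominates the tent through (k, a_k):
   a_1 + ... + a_n >= (n+1)/2 * a_k. *)
Lemma concave_sum_lower n a k :
  a 0%nat = 0 -> a (n + 1)%nat = 0 -> concave_seq (n + 2) a -> (1 <= k <= n)%nat ->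
  sum1 n a >= (INR n + 1) / 2 * a k.
Proof.
  intros Ha0 Han Hconc Hk.
  set (b := fun i => a (n + 2 - 1 - i)%nat).
  assert (Hb0 : b 0%nat = 0) by (unfold b; rewrite <- Han; f_equal; lia).
  assert (Hbconc : concave_seq (S (n + 1)) b)
    by (replace (S (n + 1)) with (n + 2)%nat by lia; apply concave_seq_rev, Hconc).
  assert (Ha : concave_seq (S (n + 1)) a) by (replace (S (n + 1)) with (n + 2)%nat by lia; exact Hconc).
  pose proof (partial_sum_lower a (n + 1) Ha0 Ha k ltac:(lia)) as Hleft.
  pose proof (partial_sum_lower b (n + 1) Hb0 Hbconc (n + 1 - k) ltac:(lia)) as Hright.
  replace (b (n + 1 - k)%nat) with (a k) in Hright by (unfold b; f_equal; lia).
  assert (Hsplit : sumR k (fun i => a (S i)) + sumR (n + 1 - k) (fun i => b (S i)) = sum1 n a + a k).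
  { rewrite (sumR_rev (n + 1 - k)).
    rewrite (sumR_ext (n + 1 - k) _ (fun i => a (S (k - 1 + i)))) by (intros i Hi; unfold b; f_equal; lia).
    unfold sum1.
    replace (sumR n (fun i => a (S i))) with (sumR (k - 1 + (n + 1 - k)) (fun i => a (S i)))
      by (f_equal; lia).
    rewrite sumR_app. replace k with (S (k - 1)) at 1 by lia. simpl sumR.
    replace (S (k - 1)) with k by lia. lra. }
  rewrite minus_INR, plus_INR in Hright by lia. simpl INR in Hright. lra.
Qed.

(** * The secular condition for d = c - a *)

Lemma secular_of_all_pos n k d : (2 <= n)%nat -> (1 <= k <= n)%nat ->
  (forall i, (1 <= i <= n)%nat -> 0 < d i) ->
  0 < 1 + d k * sum1_off n k (fun i => / d i).
Proof.
  intros Hn Hk Hd. pose proof (off_inv_sum_pos n k d Hn Hk (fun i Hi _ => Hd i Hi)).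
  pose proof (Hd k Hk). nra.
Qed.

(* Writing a_i = sum_j G(i,j) w_j with w_j the second
   differences (Green's function of the discrete Laplacian on {0,...,5}), the
   elementary symmetric function e_3(c - a) is a cubic in w >= 0 with positive
   coefficients. *)
Lemma concave4_e3 a1 a2 a3 a4 :
  0 < a1 -> 2 * a1 - a2 >= 0 -> 2 * a2 - a1 - a3 >= 0 -> 2 * a3 - a2 - a4 >= 0 -> 2 * a4 - a3 >= 0 ->
  let c := 3 * (a1 + a2 + a3 + a4) / 8 in
  0 < (c - a1) * (c - a2) * (c - a3) + (c - a1) * (c - a2) * (c - a4)
      + (c - a1) * (c - a3) * (c - a4) + (c - a2) * (c - a3) * (c - a4).
Proof.
  intros Ha1 Hw1 Hw2 Hw3 Hw4 c.
  set (w1 := 2 * a1 - a2) in *. set (w2 := 2 * a2 - a1 - a3) in *.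
  set (w3 := 2 * a3 - a2 - a4) in *. set (w4 := 2 * a4 - a3) in *.
  assert (E1 : a1 = (4 * w1 + 3 * w2 + 2 * w3 + w4) / 5) by (unfold w1, w2, w3, w4; field).
  assert (E2 : a2 = (3 * w1 + 6 * w2 + 4 * w3 + 2 * w4) / 5) by (unfold w1, w2, w3, w4; field).
  assert (E3 : a3 = (2 * w1 + 4 * w2 + 6 * w3 + 3 * w4) / 5) by (unfold w1, w2, w3, w4; field).
  assert (E4 : a4 = (w1 + 2 * w2 + 3 * w3 + 4 * w4) / 5) by (unfold w1, w2, w3, w4; field).
  unfold c; rewrite E1, E2, E3, E4. clearbody w1 w2 w3 w4.
  assert (0 < (w1 + w2 + w3 + w4) ^ 3) by (apply pow_lt; lra).
  assert (0 <= w1 * w2) by nra. assert (0 <= w1 * w3) by nra. assert (0 <= w1 * w4) by nra.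
  assert (0 <= w2 * w3) by nra. assert (0 <= w2 * w4) by nra. assert (0 <= w3 * w4) by nra.
  nra.
Qed.

(* 1 + d (1/x + 1/y + 1/z) = (d (xy + xz + yz) + xyz) / (xyz). *)
Lemma secular3_pos d x y z : 0 < x -> 0 < y -> 0 < z ->
  0 < d * (x * y + x * z + y * z) + x * y * z -> 0 < 1 + d * (/ x + / y + / z).
Proof.
  intros Hx Hy Hz H.
  replace (1 + d * (/ x + / y + / z)) with ((d * (x * y + x * z + y * z) + x * y * z) / (x * y * z))
    by (field; lra).
  apply Rdiv_lt_0_compat; [exact H|]. repeat apply Rmult_lt_0_compat; assumption.
Qed.

Lemma concave4_secular a k :
  a 0%nat = 0 -> a 5%nat = 0 -> concave_seq 6 a -> (forall i, (1 <= i <= 4)%nat -> 0 < a i) ->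
  (1 <= k <= 4)%nat -> (forall i, (1 <= i <= 4)%nat -> a i <= a k) ->
  let c := 3 / 8 * sum1 4 a in
  (forall i, (1 <= i <= 4)%nat -> i <> k -> 0 < c - a i) /\
  0 < 1 + (c - a k) * sum1_off 4 k (fun i => / (c - a i)).
Proof.
  intros Ha0 Ha5 Hconc Hpos Hk Hkmax c.
  pose proof (Hconc 0%nat ltac:(lia)) as C1. pose proof (Hconc 1%nat ltac:(lia)) as C2.
  pose proof (Hconc 2%nat ltac:(lia)) as C3. pose proof (Hconc 3%nat ltac:(lia)) as C4.
  pose proof (Hpos 1%nat ltac:(lia)) as P1. pose proof (Hpos 2%nat ltac:(lia)) as P2.
  pose proof (Hpos 3%nat ltac:(lia)) as P3. pose proof (Hpos 4%nat ltac:(lia)) as P4.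
  simpl in C1, C2, C3, C4. rewrite Ha0 in C1. rewrite Ha5 in C4.
  assert (Hc : c = 3 * (a 1%nat + a 2%nat + a 3%nat + a 4%nat) / 8)
    by (unfold c, sum1; simpl; lra).
  pose proof (concave4_e3 (a 1%nat) (a 2%nat) (a 3%nat) (a 4%nat) ltac:(lra) ltac:(lra)
                ltac:(lra) ltac:(lra) ltac:(lra)) as He3.
  simpl in He3. rewrite <- Hc in He3.
  (* Any two gaps c - a_i have a positive sum, so every gap but the smallest is positive. *)
  assert (Hgaps : forall i, (1 <= i <= 4)%nat -> i <> k -> 0 < c - a i).
  { intros i Hi Hik. pose proof (Hkmax i Hi). rewrite Hc.
    destruct i as [|[|[|[|[|i]]]]], k as [|[|[|[|[|k]]]]]; try lia; lra. }
  split; [exact Hgaps|].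
  unfold sum1_off, sum1; destruct k as [|[|[|[|[|k]]]]]; try lia; simpl;
    rewrite ?Rplus_0_l, ?Rplus_0_r; apply secular3_pos; try (apply Hgaps; lia); lra.
Qed.

Lemma concave_form_bound n a :
  (4 <= n)%nat -> a 0%nat = 0 -> a (n + 1)%nat = 0 -> concave_seq (n + 2) a ->
  (forall i, (1 <= i <= n)%nat -> 0 < a i) ->
  forall y, admissible n y ->
  sum1 n (fun i => a i * y i ^ 2) < (INR n - 1) / INR n * sum1 n a / 2 * sum1 n (fun i => y i ^ 2).
Proof.
  intros Hn Ha0 Han Hconc Hpos y Hy.
  set (c := (INR n - 1) / INR n * sum1 n a / 2).
  destruct (argmax_index a n ltac:(lia)) as [k [Hk Hkmax]].
  assert (Hsec : (forall i, (1 <= i <= n)%nat -> i <> k -> 0 < c - a i) /\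
                 0 < 1 + (c - a k) * sum1_off n k (fun i => / (c - a i))).
  { destruct (Nat.eq_dec n 4) as [->|Hn5].
    - replace c with (3 / 8 * sum1 4 a) by (unfold c; simpl INR; field).
      apply concave4_secular; auto.
    - assert (Hck : a k < c).
      { pose proof (concave_sum_lower n a k Ha0 Han Hconc Hk) as Htent.
        assert (HN : 5 <= INR n) by (replace 5 with (INR 5) by (simpl; lra); apply le_INR; lia).
        pose proof (Hpos k Hk). unfold c. set (N := INR n) in *.
        apply (Rmult_lt_reg_l (2 * N)); [lra|].
        replace (2 * N * ((N - 1) / N * sum1 n a / 2)) with ((N - 1) * sum1 n a) by (field; lra).
        (* (n-1)(n+1)/2 > 2n as soon as n >= 5 *)
        assert ((N - 1) * sum1 n a >= (N - 1) * ((N + 1) / 2 * a k))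
          by (apply Rle_ge, Rmult_le_compat_l; lra).
        assert (0 < (N * N - 4 * N - 1) * a k) by (apply Rmult_lt_0_compat; nra).
        nra. }
      assert (Hall : forall i, (1 <= i <= n)%nat -> 0 < c - a i)
        by (intros i Hi; pose proof (Hkmax i Hi); lra).
      split; [intros; apply Hall; auto|].
      apply (secular_of_all_pos n k (fun i => c - a i)); auto; lia. }
  destruct Hsec as [Hgaps Hcond].
  pose proof (form_pos n k (fun i => c - a i) ltac:(lia) Hk Hgaps y Hy Hcond).
  pose proof (form_shift n c a y). lra.
Qed.

Theorem mainTheorem6 (n : nat) (sigma : nat -> R)
  (hn : (4 <= n)%nat)
  (hpos : forall i : nat, (1 <= i <= n)%nat -> 0 < sigma i)
  (hconc : concave_seq (n + 2) (padded_sq n sigma)) :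
  exists M : R, is_max_rquot n sigma M /\
    (INR n - 1) / INR n * sum1 n (fun i => (sigma i)^2) > 2 * M.
Proof.
  set (a := padded_sq n sigma) in *.
  assert (Ha : forall i, (1 <= i <= n)%nat -> a i = sigma i ^ 2).
  { intros i Hi. unfold a, padded_sq.
    destruct (Nat.eqb_spec i 0), (Nat.leb_spec i n); [lia|lia|reflexivity|lia]. }
  assert (Han : a (n + 1)%nat = 0).
  { unfold a, padded_sq. destruct (Nat.eqb_spec (n + 1) 0), (Nat.leb_spec (n + 1) n); lia || reflexivity. }
  assert (Hform : forall y, sum1 n (fun i => sigma i ^ 2 * y i ^ 2) = sum1 n (fun i => a i * y i ^ 2))
    by (intros y; apply sum1_ext; intros i Hi; rewrite Ha; auto).
  assert (Hsum : sum1 n (fun i => sigma i ^ 2) = sum1 n a)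
    by (apply sum1_ext; intros i Hi; rewrite Ha; auto).
  assert (Hapos : forall i, (1 <= i <= n)%nat -> 0 < a i)
    by (intros i Hi; rewrite Ha by exact Hi; apply pow_lt, hpos, Hi).
  destruct (form_max_exists n a ltac:(lia)) as [lam [[x [Hx Hxeq]] Hub]].
  pose proof (sqnorm_pos n x Hx) as Hxn.
  exists lam. split; [split|].
  - exists x. split; [exact Hx|]. unfold rquot. rewrite Hform, Hxeq. field; lra.
  - intros y Hy. unfold rquot. rewrite Hform. pose proof (sqnorm_pos n y Hy).
    apply (Rmult_le_reg_r (sum1 n (fun i => y i ^ 2))); [lra|].
    unfold Rdiv; rewrite Rmult_assoc, Rinv_l by lra. rewrite Rmult_1_r. apply Hub, Hy.
  - rewrite Hsum. pose proof (concave_form_bound n a hn eq_refl Han hconc Hapos x Hx) as Hbound.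
    rewrite Hxeq in Hbound.
    assert (lam < (INR n - 1) / INR n * sum1 n a / 2)
      by (apply (Rmult_lt_reg_r (sum1 n (fun i => x i ^ 2))); lra).
    lra.
Qed.
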